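(* Let $n\in\mathbb{N}$ and let $\boldsymbol{V}$ be a finite E-subspace of $\boldsymbol{Y}_n$. For every weak $n$-coloring on $\boldsymbol{V}$ there is a finite sequence $\boldsymbol{V}_0,\dots,\boldsymbol{V}_k$ of Esakia spaces such that: (i) $\boldsymbol{V}_0=\boldsymbol{V}$ and each $\boldsymbol{V}_{i+1}$ is obtained by applying a $\beta$-reduction $f_i\colon \boldsymbol{V}_i\to\boldsymbol{V}_{i+1}$ to $\boldsymbol{V}_i$; (ii) the kernel $\mathrm{Ker}(f_{k-1}\circ\cdots\circ f_0)$ does not identify any pair of elements of $\boldsymbol{V}$ of distinct color; (iii) for every $m\in\mathbb{N}$ such that $y_{m,0},\dots,y_{m,2^{n+1}-1}\in V$, there are $i<j$ such that $\langle y_{m,i},y_{m,j}\rangle\in\mathrm{Ker}(f_{k-1}\circ\cdots\circ f_0)$.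
   Context: $\mathbb{N}=\{0,1,2,\dots\}$. For $n\in\mathbb{N}$ let $P_n=\{y_{m,i}: m,i\in\mathbb{N},\ i\le 2^{n+1}-1\}$ (pairwise distinct elements) and define $y_{m,i}\prec y_{m-1,j}$ whenever $m\ge1$ and $i\ne j$ (and no other relations). $\boldsymbol{Y}_n$ is the root compactification of $P_n$ ordered by the reflexive transitive closure of $\prec$: a new least element $\bot$ is added and $U$ is declared open iff $\bot\notin U$ or $U$ is cofinite; it is an Esakia space. An E-subspace of an Esakia space is a closed upset with induced topology and order; finite ones are finite posets with the discrete topology. $\{0,1\}^n$ is ordered componentwise ($\{0,1\}^0$ has a single element). A weak $n$-coloring of a finite poset $\boldsymbol{V}$ is an order-preserving map $\boldsymbol{V}\to\{0,1\}^n$; the value at $x$ is the color of $x$. If $x\ne y$ are elements of a finite poset $\boldsymbol{W}$ with exactly the same immediate successors (an immediate successor of $x$ is a $z>x$ with nothing strictly between), the $\beta$-reduction identifying $x$ and $y$ is the quotient map from $\boldsymbol{W}$ to $\boldsymbol{W}/R$, where $R$ is the smallest equivalence relation identifying $x$ and $y$, and $\boldsymbol{W}/R$ is ordered by $u/R\sqsubseteq v/R$ iff $u'\le v'$ for some $u'\in u/R$, $v'\in v/R$. $\mathrm{Ker}(g)=\{\langle u,v\rangle: g(u)=g(v)\}$; for $k=0$ the composition is the identity. *)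

From HB Require Import structures.
From mathcomp Require Import all_boot.
From mathcomp Require Import finmap.
From Stdlib Require Import Relations.
Set Implicit Arguments. Unset Strict Implicit. Unset Printing Implicit Defensive.
Local Open Scope fset_scope.

(* Index set for i : {0,...,2^(n+1)-1} is 'I_(2^n.+1).
   Points of Y_n: None = bottom, Some (m, i) = y_{m,i}. *)
Definition Yn (n : nat) : Type := option (nat * 'I_(2 ^ n.+1)).

Definition Yprec (n : nat) (a b : Yn n) : Prop :=
  match a, b with
  | Some (m, i), Some (m', j) => m = m'.+1 /\ i <> j
  | _, _ => False
  end.

Definition Yle (n : nat) (a b : Yn n) : Prop :=
  a = None \/ clos_refl_trans (Yn n) (@Yprec n) a b.

Definition Yopen (n : nat) (U : Yn n -> Prop) : Prop :=
  ~ U None \/ exists s : seq (Yn n), forall a, ~ U a -> a \in s.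

Definition Yclosed (n : nat) (C : Yn n -> Prop) : Prop :=
  Yopen (fun a => ~ C a).

Definition finite_Esubspace (n : nat) (V : {fset Yn n}) : Prop :=
  Yclosed (fun a => a \in V) /\
  (forall a b : Yn n, a \in V -> Yle a b -> b \in V).

Record fposet := FPoset { fcar :> finType; fle : fcar -> fcar -> Prop }.

Definition is_poset (W : fposet) : Prop :=
  (forall x : W, fle x x) /\
  (forall x y : W, fle x y -> fle y x -> x = y) /\
  (forall x y z : W, fle x y -> fle y z -> fle x z).

Definition Esub (n : nat) (V : {fset Yn n}) : fposet :=
  @FPoset V (fun u v : V => Yle (val u) (val v)).

Definition imm_succ (W : fposet) (x z : W) : Prop :=
  fle x z /\ x <> z /\ ~ (exists w : W, fle x w /\ x <> w /\ fle w z /\ w <> z).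

(* f : W -> U is (up to the identification of U with W/R) the beta-reduction
   identifying two distinct elements x, y having the same immediate successors:
   f is surjective, its kernel is the smallest equivalence relation R
   identifying x and y, and U carries the quotient order
   f u ⊑ f v iff u' <= v' for some u' R u, v' R v. *)
Definition beta_reduction (W U : fposet) (f : W -> U) : Prop :=
  exists x y : W,
    [/\ x <> y,
        (forall z : W, imm_succ x z <-> imm_succ y z),
        (forall a : U, exists u : W, f u = a),
        (forall u v : W, f u = f v <-> (u = v \/ (u = x /\ v = y) \/ (u = y /\ v = x))) &
        (forall a b : U, fle a b <-> exists u v : W, [/\ f u = a, f v = b & fle u v])].

(* reduces_to W U g : there is a sequence W = V_0, ..., V_k = U of Esakia spaces
   (finite posets) with beta-reductions f_i : V_i -> V_{i+1}, and
   g = f_{k-1} o ... o f_0 (the identity when k = 0). *)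
Inductive reduces_to (W : fposet) : forall U : fposet, (W -> U) -> Prop :=
  | red_refl : reduces_to (fun x : W => x)
  | red_step (U U' : fposet) (g : W -> U) (f : U -> U') :
      reduces_to g -> is_poset U' -> beta_reduction f ->
      reduces_to (fun x => f (g x)).

Definition color (n : nat) := {ffun 'I_n -> bool}.
Definition color_le (n : nat) (a b : color n) : Prop := forall i, a i ==> b i.

Definition weak_coloring (n : nat) (W : fposet) (c : W -> color n) : Prop :=
  forall u v : W, fle u v -> color_le (c u) (c v).

From mathcomp Require Import all_boot.
From mathcomp Require Import finmap.
From Stdlib Require Import Relations.
From mathcomp Require Import zify.
Set Implicit Arguments. Unset Strict Implicit. Unset Printing Implicit Defensive.

(* A beta-reduction may identify two points as soon as they have the same strict
   upper set.  Call every index a survivor of level 0, and call [i] a survivor of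
   level [m+1] when level [m] is full and [y_(m,i)] shares its colour with another
   survivor of level [m].  Successive beta-reductions identify any two survivors
   of the same level and colour, level by level from the top: once this is done
   for the levels [< m], a survivor [y_(m,i)] lies strictly below exactly the
   points of levels [< m] (below [y_(m-1,j)] for [j <> i] directly, below
   [y_(m-1,i)] through its partner), so two survivors of level [m] can be
   identified next.  Only points of equal colour are ever identified.
   For (iii), a pigeonhole invariant: some colour [x] bounds the colours of the
   survivors of level [m] and has fewer colours below it than there are
   survivors (initially [x] is the top colour, and [2^n < 2^(n+1)]).  Passing to
   the meet of these colours preserves it, because the indices dropped at a full
   level have pairwise distinct colours, shared with no other survivor.  Hence a
   full level [m] has a survivor [i] of level [m+1], and [y_(m,i)] gets
   identified with its partner. *)

Section StrictOrder.
Variable W : fposet.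

Definition flt (x z : W) : Prop := fle x z /\ x <> z.

Lemma imm_succ_eq_of_flt_eq (x y : W) :
  (forall z, flt x z <-> flt y z) -> forall z, imm_succ x z <-> imm_succ y z.
Proof. rewrite /imm_succ /flt; firstorder. Qed.

Lemma fle_of_flt_eq (x y z : W) :
  (forall w, flt x w <-> flt y w) -> fle x z -> x <> z -> fle y z.
Proof. by move=> flt_xy xz nxz; case: ((flt_xy z).1 (conj xz nxz)). Qed.

End StrictOrder.

Section BetaQuotient.
Variables (W : fposet) (x y : W).
Hypotheses (W_poset : is_poset W) (neq_xy : x <> y)
  (flt_xy : forall z, flt x z <-> flt y z).

Let fle_refl := W_poset.1.
Let fle_anti := W_poset.2.1.
Let fle_trans := W_poset.2.2.

Let fle_y_of_x z : fle x z -> x <> z -> fle y z.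
Proof. exact: fle_of_flt_eq. Qed.

Let fle_x_of_y z : fle y z -> y <> z -> fle x z.
Proof. by apply: fle_of_flt_eq => w; rewrite flt_xy. Qed.

Definition merge (w : W) : W := if w == y then x else w.

Lemma merge_neq (w : W) : merge w != y.
Proof. by rewrite /merge; case: (eqVneq w y) => // _; apply/eqP. Qed.

Lemma merge_id (w : W) : w != y -> merge w = w.
Proof. by rewrite /merge => /negbTE ->. Qed.

Lemma merge_eq u v :
  merge u = merge v <-> u = v \/ (u = x /\ v = y) \/ (u = y /\ v = x).
Proof.
rewrite /merge; split.
  by case: (eqVneq u y) => [->|_]; case: (eqVneq v y) => [->|_]; auto.
by case=> [->|[[-> ->]|[-> ->]]] //; rewrite eqxx; case: ifP.
Qed.

Definition beta_carrier : finType := {w : W | w != y}.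

Definition beta_map (w : W) : beta_carrier := exist _ (merge w) (merge_neq w).

(* Points are represented by elements other than [y]: [u <= y] becomes [u <= x],
   while [y <= v] adds nothing since it already implies [x <= v]. *)
Definition beta_le (a b : beta_carrier) : Prop :=
  fle (val a) (val b) \/ (val b = x /\ fle (val a) y).

Definition beta_quotient : fposet := @FPoset beta_carrier beta_le.

Lemma beta_map_val (a : beta_carrier) : beta_map (val a) = a.
Proof. by apply: val_inj; rewrite /= merge_id // (valP a). Qed.

Lemma beta_map_eq u v :
  beta_map u = beta_map v <-> u = v \/ (u = x /\ v = y) \/ (u = y /\ v = x).
Proof.
rewrite -merge_eq; split=> [/(congr1 val) //|e].
exact: val_inj.
Qed.

Lemma between_xy (b : W) : b != y -> fle x b -> fle b y -> b = x.
Proof.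
move=> /eqP nby xb by_; have [//|nbx] := eqVneq b x.
by case: nby; apply: (fle_anti by_); apply: fle_y_of_x xb _; apply/eqP; rewrite eq_sym.
Qed.

Lemma beta_quotient_poset : is_poset beta_quotient.
Proof.
split; first by move=> a; left; apply: fle_refl.
split=> [a b|a b c].
  case=> [ab|[bx ay]] [ba|[ax by_]]; apply: val_inj.
  - exact: fle_anti.
  - by rewrite ax (between_xy (valP b)) // -ax.
  - by rewrite bx (between_xy (valP a)) // -bx.
  - by rewrite ax bx.
case=> [ab|[bx ay]] [bc|[cx by_]].
- by left; apply: fle_trans bc.
- by right; split; last exact: fle_trans by_.
- have [cx|ncx] := eqVneq (val c) x; first by right.
  have yc : fle y (val c).
    by apply: fle_y_of_x; [rewrite -bx | apply/eqP; rewrite eq_sym].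
  by left; exact: fle_trans ay yc.
- by right.
Qed.

Lemma beta_le_image (a b : beta_carrier) :
  beta_le a b <-> exists u v, [/\ beta_map u = a, beta_map v = b & fle u v].
Proof.
split=> [[ab|[bx ay]]|[u [v [<- <- uv]]]].
- by exists (val a), (val b); rewrite !beta_map_val.
- exists (val a), y; rewrite beta_map_val; split => //.
  by apply: val_inj; rewrite /= /merge eqxx.
rewrite /beta_le /= /merge.
case: (eqVneq u y) => [uy|nuy]; case: (eqVneq v y) => [vy|nvy].
- by left; apply: fle_refl.
- by left; apply: fle_x_of_y; [rewrite -uy | apply/eqP; rewrite eq_sym].
- by right; rewrite -vy.
- by left.
Qed.

Lemma beta_reduction_beta_map : @beta_reduction W beta_quotient beta_map.
Proof.
exists x, y; split => //.
- exact: imm_succ_eq_of_flt_eq.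
- by move=> a; exists (val a); apply: beta_map_val.
- exact: beta_map_eq.
- exact: beta_le_image.
Qed.

End BetaQuotient.

Lemma beta_reduction_exists (W : fposet) (x y : W) :
  is_poset W -> x <> y -> (forall z, flt x z <-> flt y z) ->
  exists (U : fposet) (f : W -> U),
    [/\ is_poset U, beta_reduction f &
        forall u v, f u = f v <-> u = v \/ (u = x /\ v = y) \/ (u = y /\ v = x)].
Proof.
move=> W_poset neq_xy flt_xy; exists (beta_quotient x y), (beta_map neq_xy).
split; [exact: beta_quotient_poset | exact: beta_reduction_beta_map | exact: beta_map_eq].
Qed.

Section Reductions.
Variable W : fposet.

Lemma reduces_to_poset (U : fposet) (g : W -> U) :
  is_poset W -> reduces_to g -> is_poset U.
Proof. by move=> W_poset; elim. Qed.

Lemma reduces_to_surj (U : fposet) (g : W -> U) :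
  reduces_to g -> forall a, exists u, g u = a.
Proof.
elim=> [|U0 U' g0 f _ IH _ [x [y [_ _ f_surj _ _]]]] a; first by exists a.
by have [b <-] := f_surj a; have [u <-] := IH b; exists u.
Qed.

Lemma reduces_to_fle (U : fposet) (g : W -> U) :
  reduces_to g ->
  forall a b, fle a b <-> exists u v, [/\ g u = a, g v = b & fle u v].
Proof.
elim=> [|U0 U' g0 f _ IH _ [x [y [_ _ _ _ f_fle]]]] a b.
  by split=> [ab|[u [v [-> -> //]]]]; exists a, b.
rewrite f_fle; split=> [[a' [b' [<- <- /IH [u [v [<- <- uv]]]]]]|[u [v [<- <- uv]]]].
  by exists u, v.
by exists (g0 u), (g0 v); split => //; apply/IH; exists u, v.
Qed.

Lemma reduces_to_mono (U : fposet) (g : W -> U) :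
  reduces_to g -> forall u v, fle u v -> fle (g u) (g v).
Proof. by move=> red_g u v uv; apply/(reduces_to_fle red_g); exists u, v. Qed.

Variables (K : eqType) (k : W -> K).
Hypothesis W_poset : is_poset W.

(* Equal strict upper sets are what a beta-reduction identifying [g u'] and
   [g v'] requires. *)
Hypothesis mergeable_pair : forall (U : fposet) (g : W -> U),
  reduces_to g -> (forall u v, g u = g v -> k u = k v) ->
  forall u v, k u = k v -> g u <> g v ->
  exists u' v', [/\ k u' = k v', g u' <> g v' & forall z, flt (g u') z <-> flt (g v') z].

Definition unmerged (U : fposet) (g : W -> U) : {set W * W} :=
  [set p | (k p.1 == k p.2) && (g p.1 != g p.2)].

Lemma reduces_to_key_kernel :
  exists (U : fposet) (g : W -> U),
    reduces_to g /\ forall u v, g u = g v <-> k u = k v.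
Proof.
suff: forall s (U : fposet) (g : W -> U), #|unmerged g| < s -> reduces_to g ->
    (forall u v, g u = g v -> k u = k v) ->
    exists (U' : fposet) (g' : W -> U'),
      reduces_to g' /\ forall u v, g' u = g' v <-> k u = k v.
  by move=> /(_ _ W (fun w => w) (ltnSn _) (red_refl W)); apply=> u v ->.
elim=> // s IH U g lt_s red_g ker_g.
case: (set_0Vmem (unmerged g)) => [unmerged0|[[u v]]].
  exists U, g; split=> // a b; split=> [/ker_g //|kab].
  apply/eqP; apply: contraT => gab.
  by rewrite -(in_set0 (a, b)) -unmerged0 inE /= kab eqxx.
rewrite inE /= => /andP [/eqP kuv /eqP guv].
have [u' [v' [kuv' guv' flt_uv']]] := mergeable_pair red_g ker_g kuv guv.
have U_poset := reduces_to_poset W_poset red_g.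
have [U' [f [U'_poset beta_f ker_f]]] := beta_reduction_exists U_poset guv' flt_uv'.
apply: (IH U' (fun w => f (g w))); last 2 first.
- exact: red_step red_g U'_poset beta_f.
- by move=> a b /ker_f [/ker_g|[[/ker_g -> /ker_g ->]|[/ker_g -> /ker_g ->]]].
rewrite -ltnS; apply: leq_trans lt_s; apply: proper_card; apply/properP; split.
  apply/subsetP => p; rewrite !inE => /andP [-> /=].
  by apply: contra => /eqP fg; apply/eqP; congr f.
exists (u', v'); rewrite !inE /= kuv' eqxx /=; first exact/eqP.
by apply/negPn/eqP/ker_f; right; left.
Qed.

End Reductions.

Section ColorLattice.
Variable n : nat.
Implicit Types (a b x y z : color n) (A C : {set color n}).

Definition cle a b : bool := [forall i, a i ==> b i].

Definition down x : {set color n} := [set z | cle z x].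

Definition meet_colors A : color n := [ffun i => [forall z in A, z i]].

Lemma cleP a b : reflect (color_le a b) (cle a b).
Proof. exact: forallP. Qed.

Lemma cle_refl a : cle a a.
Proof. by apply/forallP => i; apply/implyP. Qed.

Lemma cle_anti a b : cle a b -> cle b a -> a = b.
Proof.
move=> /forallP ab /forallP ba; apply/ffunP => i.
by move: (ab i) (ba i); case: (a i); case: (b i).
Qed.

Lemma cle_trans b a c : cle a b -> cle b c -> cle a c.
Proof.
move=> /forallP ab /forallP bc; apply/forallP => i.
by move: (ab i) (bc i); case: (a i); case: (b i).
Qed.

Lemma meet_colors_le A z : z \in A -> cle (meet_colors A) z.
Proof.
by move=> zA; apply/forallP => i; rewrite ffunE; apply/implyP => /forall_inP; apply.
Qed.

Lemma le_meet_colors A w : {in A, forall z, cle w z} -> cle w (meet_colors A).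
Proof.
move=> wA; apply/forallP => i; apply/implyP => wi; rewrite ffunE.
by apply/forall_inP => z /wA /forallP /(_ i); rewrite wi.
Qed.

Lemma card_down_top : #|down [ffun => true]| = 2 ^ n.
Proof.
have -> : down [ffun => true] = setT.
  by apply/setP => z; rewrite !inE; apply/forallP => i; rewrite ffunE implybT.
by rewrite cardsT card_ffun card_bool card_ord.
Qed.

(* [C] and the part of [down y] strictly below [y] are disjoint subsets of [down x]. *)
Lemma card_interval C x y :
  cle y x -> {in C, forall z, cle y z && cle z x} -> #|C| + #|down y| <= #|down x| + 1.
Proof.
move=> yx Cyx.
have disj : C :&: (down y :\ y) = set0.
  apply/setP => z; rewrite !inE; apply/negbTE; apply/andP => -[/Cyx /andP [yz _]].
  by case/andP => /eqP nzy zy; apply: nzy; apply: cle_anti.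
have sub : C :|: (down y :\ y) \subset down x.
  apply/subsetP => z; rewrite !inE => /orP [/Cyx /andP [] //|/andP [_ zy]].
  exact: cle_trans zy yx.
have yy : y \in down y by rewrite inE cle_refl.
have := cardsUI C (down y :\ y); rewrite disj cards0 addn0 => cardU.
by rewrite (cardsD1 y (down y)) yy add1n addnS addn1 ltnS -cardU; apply: subset_leq_card.
Qed.

End ColorLattice.

Section LevelsOfY.
Variables (n : nat) (V : {fset Yn n}).
Hypothesis V_upset : forall a b : Yn n, a \in V -> Yle a b -> b \in V.

Local Notation N := (2 ^ n.+1).
Local Notation Yrt := (clos_refl_trans (Yn n) (@Yprec n)).

Definition level (a : Yn n) : nat := if a is Some (m, _) then m else 0.

Lemma Yrt_level a b : Yrt a b -> a = b \/ level b < level a.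
Proof.
elim=> {a b} [[[m i]|] [[m' j]|] //= [-> _]|a|a b d _ [->|ab] _ [<-|bd]]; auto.
by right; apply: ltn_trans ab.
Qed.

Lemma N_gt1 : 1 < N.
Proof. by rewrite -[1]/(2 ^ 0) ltn_exp2l. Qed.

Lemma bottom_notin : None \notin V.
Proof.
apply/negP => botV.
pose M := \max_(a : V) level (val a).
have yV : Some (M.+1, Ordinal (ltnW N_gt1)) \in V by apply: V_upset botV _; left.
by have := @leq_bigmax _ (fun a => level (val a)) (FSetSub yV); rewrite ltnn.
Qed.

Lemma val_Esub (u : Esub V) : exists i, val u = Some (level (val u), i).
Proof.
case: u => [[[m i]|] uV] /=; first by exists i.
by move: bottom_notin; rewrite uV.
Qed.

Lemma Esub_fleE (u v : Esub V) : fle u v <-> Yrt (val u) (val v).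
Proof.
split=> [[uN|//]|]; last by right.
by have [i] := val_Esub u; rewrite uN.
Qed.

Lemma Esub_fle_level (u v : Esub V) :
  fle u v -> u = v \/ level (val v) < level (val u).
Proof. by move=> /Esub_fleE /Yrt_level [/val_inj|]; auto. Qed.

Lemma Esub_poset : is_poset (Esub V).
Proof.
split; first by move=> u; apply/Esub_fleE; apply: rt_refl.
split=> [u v uv vu|u v w /Esub_fleE uv /Esub_fleE vw]; last first.
  by apply/Esub_fleE; apply: rt_trans vw.
case: (Esub_fle_level uv) => // ltvu; case: (Esub_fle_level vu) => // ltuv.
by have := ltn_trans ltvu ltuv; rewrite ltnn.
Qed.

Lemma Esub_fle_step (u v : Esub V) m i j :
  val u = Some (m.+1, i) -> val v = Some (m, j) -> i <> j -> fle u v.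
Proof. by move=> eu ev ij; apply/Esub_fleE; rewrite eu ev; apply: rt_step. Qed.

Definition full m := [forall i : 'I_N, Some (m, i) \in V].

Lemma full_pred m : full m.+1 -> full m.
Proof.
move=> /forallP fullS; apply/forallP => j.
pose i : 'I_N := if val j == 0 then Ordinal N_gt1 else Ordinal (ltnW N_gt1).
have nij : val i != val j.
  by rewrite /i; case: (eqVneq (val j) 0) => [->|]; rewrite // eq_sym.
apply: (V_upset (fullS i)); right; apply: rt_step; split=> // eij.
by rewrite eij eqxx in nij.
Qed.

Variable c : Esub V -> color n.
Hypothesis c_mono : weak_coloring c.

(* junk value [[ffun => false]] when [y_(m,i)] is not in [V] *)
Definition color_at m (i : 'I_N) : color n :=
  if insub (Some (m, i)) : option V is Some u then c u else [ffun => false].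

Lemma color_atE (u : Esub V) m i : val u = Some (m, i) -> color_at m i = c u.
Proof. by move=> eu; rewrite /color_at -eu valK. Qed.

Fixpoint survivors m : {set 'I_N} :=
  if m is k.+1 then
    [set i in survivors k | full k &&
       [exists i', [&& i' \in survivors k, i' != i & color_at k i' == color_at k i]]]
  else setT.

Lemma survivorsSP m i :
  i \in survivors m.+1 <->
  [/\ full m, i \in survivors m &
      exists i', [/\ i' \in survivors m, i' != i & color_at m i' = color_at m i]].
Proof.
rewrite /= inE; split.
  by case/and3P => -> -> /existsP [i' /and3P [? ? /eqP ?]]; split=> //; exists i'.
case=> -> -> [i' [? ? ci']]; apply/existsP; exists i'; apply/and3P; split=> //.
exact/eqP.
Qed.

Lemma survivors_subset m : survivors m.+1 \subset survivors m.
Proof. by apply/subsetP => i /survivorsSP []. Qed.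

Lemma removed_color_unique m i j :
  full m -> i \in survivors m -> i \notin survivors m.+1 ->
  j \in survivors m -> color_at m j = color_at m i -> j = i.
Proof.
move=> fullm iT iT1 jT cji; apply/eqP; apply: contraNT iT1 => nji.
by apply/survivorsSP; split=> //; exists j.
Qed.

Lemma card_removed m :
  full m ->
  #|survivors m :\: survivors m.+1| + #|color_at m @: survivors m.+1|
    <= #|color_at m @: survivors m|.
Proof.
move=> fullm; set R := survivors m :\: survivors m.+1.
have uniqR i j : i \in R -> j \in survivors m -> color_at m j = color_at m i -> j = i.
  by case/setDP=> iT iT1; apply: removed_color_unique.
have disj : (color_at m @: R) :&: (color_at m @: survivors m.+1) = set0.
  apply/setP => z; rewrite !inE; apply/negbTE/andP.
  move=> [/imsetP [i iR ->] /imsetP [j jT1 cij]].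
  have jT := subsetP (survivors_subset m) j jT1.
  by move: (iR); rewrite -(uniqR i j iR jT (esym cij)) inE jT1.
rewrite -(card_in_imset (f := color_at m) (D := R)); last first.
  by move=> i j iR /setDP [jT _] cij; apply/esym/(uniqR i j).
have := cardsUI (color_at m @: R) (color_at m @: survivors m.+1).
rewrite disj cards0 addn0 => <-.
apply/subset_leq_card/subsetP => z; rewrite inE => /orP [] /imsetP [i iT ->].
  by apply: imset_f; case/setDP: iT.
by apply: imset_f; apply: (subsetP (survivors_subset m)).
Qed.

Lemma color_survivorS_le m i k :
  i \in survivors m.+1 -> Some (m.+1, i) \in V -> k \in survivors m ->
  cle (color_at m.+1 i) (color_at m k).
Proof.
case/survivorsSP => fullm _ [i' [_ ni'i ci']] iV kT.
have [k' [nk'i <-]] : exists k', k' != i /\ color_at m k' = color_at m k.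
  by case: (eqVneq k i) => [->|nki]; [exists i' | exists k].
have k'V : Some (m, k') \in V := forallP fullm k'.
rewrite (color_atE (u := FSetSub iV)) // (color_atE (u := FSetSub k'V)) //.
apply/cleP/c_mono/(Esub_fle_step (u := FSetSub iV) (v := FSetSub k'V)) => //.
by apply/eqP; rewrite eq_sym.
Qed.

Definition survivors_bounded m := exists x,
  #|down x| < #|survivors m| /\
  {in survivors m, forall i, Some (m, i) \in V -> cle (color_at m i) x}.

Lemma survivors_bounded0 : survivors_bounded 0.
Proof.
exists [ffun => true]; split.
  by rewrite card_down_top cardsT card_ord ltn_exp2l.
by move=> i _ _; apply/forallP => k; rewrite ffunE implybT.
Qed.

Lemma survivors_boundedS m : full m -> survivors_bounded m -> survivors_bounded m.+1.
Proof.
move=> fullm [x [lt_x_T colx]].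
set T := survivors m; set T1 := survivors m.+1; set C := color_at m @: T.
have Cx : {in C, forall z, cle z x}.
  by move=> z /imsetP [i iT ->]; apply: colx (forallP fullm i).
have [i0 i0T] : exists i0, i0 \in T by apply/card_gt0P; apply: leq_ltn_trans lt_x_T.
have meetx : cle (meet_colors C) x.
  by apply: (cle_trans (meet_colors_le (imset_f _ i0T))); apply/Cx/imset_f.
exists (meet_colors C); split; last first.
  move=> i iT1 iV; apply: le_meet_colors => z /imsetP [k kT ->].
  exact: color_survivorS_le.
have interval : #|C| + #|down (meet_colors C)| <= #|down x| + 1.
  by apply: card_interval meetx _ => z zC; rewrite meet_colors_le ?Cx.
have removed := card_removed fullm.
have splitT : #|T1| + #|T :\: T1| = #|T|.
  by rewrite -(cardsID T1 T) (setIidPr (survivors_subset m)).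
have C_le_x : #|C| <= #|down x| by apply/subset_leq_card/subsetP => z /Cx; rewrite inE.
have T1_gt0 : 0 < #|color_at m @: T1|.
  rewrite lt0n cards_eq0 imset_eq0 -cards_eq0; apply: contraTneq lt_x_T => T1_0.
  by rewrite -leqNgt -splitT T1_0 (leq_trans _ C_le_x) // (leq_trans _ removed) // leq_addr.
(* [#|down (meet_colors C)| <= #|down x| + 1 - #|C| < #|T| + 1 - #|C| <= #|T1|] *)
move: interval removed splitT C_le_x T1_gt0 lt_x_T.
move: #|T| #|T1| #|C| #|down x| #|down (meet_colors C)| #|T :\: T1| #|color_at m @: T1|.
by move=> *; lia.
Qed.

Lemma full_survivors_bounded m : full m -> survivors_bounded m.+1.
Proof.
elim: m => [|m IH] fullm; apply: (survivors_boundedS fullm).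
  exact: survivors_bounded0.
exact: IH (full_pred fullm).
Qed.

Lemma survivorsS_nonempty m : full m -> exists i, i \in survivors m.+1.
Proof.
by case/full_survivors_bounded => x [lt_x _]; apply/card_gt0P; apply: leq_ltn_trans lt_x.
Qed.

Definition merge_key (u : Esub V) : (nat * color n) + Yn n :=
  if val u is Some (m, i) then
    if i \in survivors m then inl (m, color_at m i) else inr (val u)
  else inr (val u).

Lemma merge_keyP (u v : Esub V) :
  merge_key u = merge_key v ->
  u = v \/ exists m i j, [/\ val u = Some (m, i), val v = Some (m, j),
                             i \in survivors m, j \in survivors m &
                             color_at m i = color_at m j].
Proof.
have [i eu] := val_Esub u; have [j ev] := val_Esub v; rewrite /merge_key eu ev.
case: ifP => iT; case: ifP => jT //= [] luv.
- by move=> cij; right; exists (level (val v)), i, j; rewrite luv in iT cij *.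
- by move=> eij; left; apply: val_inj; rewrite eu ev luv eij.
Qed.

Lemma merge_key_survivors (u v : Esub V) m i j :
  val u = Some (m, i) -> val v = Some (m, j) ->
  i \in survivors m -> j \in survivors m -> color_at m i = color_at m j ->
  merge_key u = merge_key v.
Proof. by rewrite /merge_key => -> -> -> -> ->. Qed.

Lemma merge_key_level (u v : Esub V) :
  merge_key u = merge_key v -> level (val u) = level (val v).
Proof. by case/merge_keyP => [->|[m [i [j [-> -> _ _ _]]]]]. Qed.

Lemma merge_key_color (u v : Esub V) :
  merge_key u = merge_key v -> c u = c v.
Proof.
case/merge_keyP => [->|[m [i [j [eu ev _ _ cij]]]]] //.
by rewrite -(color_atE eu) -(color_atE ev).
Qed.

Section MergeablePairs.
Variables (U : fposet) (g : Esub V -> U).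
Hypotheses (red_g : reduces_to g)
  (ker_g : forall u v, g u = g v -> merge_key u = merge_key v).

Let U_poset : is_poset U := reduces_to_poset Esub_poset red_g.

Lemma image_fle_level u v : fle (g u) (g v) -> g u = g v \/ level (val v) < level (val u).
Proof.
case/(reduces_to_fle red_g) => u' [v' [gu' gv' /Esub_fle_level [e|lt]]].
  by left; rewrite -gu' -gv' e.
by right; rewrite -(merge_key_level (ker_g gu')) -(merge_key_level (ker_g gv')).
Qed.

Variable m : nat.
Hypothesis merged_below :
  forall a b, merge_key a = merge_key b -> level (val a) < m -> g a = g b.

(* [y_(k+1,i)] is below every [y_(k,j)]: for [j = i] through the partner
   [y_(k,i')] that [g] already identifies with [y_(k,i)]. *)
Lemma survivor_image_fle k i (u v : Esub V) :
  k <= m -> i \in survivors k -> val u = Some (k, i) -> level (val v) < k ->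
  fle (g u) (g v).
Proof.
elim: k i u => [//|k IH] i u le_k_m iT eu lt_v_k.
case/survivorsSP: iT => fullk iTk [i' [i'T ni'i ci']].
have yV j : Some (k, j) \in V := forallP fullk j.
have below_other j : j != i -> fle (g u) (g (FSetSub (yV j))).
  move=> nji; apply/(reduces_to_mono red_g)/(Esub_fle_step eu) => // eij.
  by rewrite eij eqxx in nji.
have below j : fle (g u) (g (FSetSub (yV j))).
  have [->|/below_other //] := eqVneq j i.
  have -> : g (FSetSub (yV i)) = g (FSetSub (yV i')).
    by apply: merged_below; [exact: merge_key_survivors | exact: le_k_m].
  exact: below_other.
have [j ev] := val_Esub v; rewrite ltnS leq_eqVlt in lt_v_k.
case/orP: lt_v_k => [/eqP eq_v|lt_v].
  by have -> : v = FSetSub (yV j) by apply: val_inj; rewrite ev eq_v.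
exact: U_poset.2.2 _ _ _ (below i) (IH i (FSetSub (yV i)) (ltnW le_k_m) iTk erefl lt_v).
Qed.

Lemma survivor_image_flt i (u : Esub V) :
  i \in survivors m -> val u = Some (m, i) ->
  forall z, flt (g u) z <-> exists v, g v = z /\ level (val v) < m.
Proof.
move=> iT eu z; split=> [[uz nuz]|[v [<- lt_v_m]]].
  have [v gv] := reduces_to_surj red_g z; exists v; split=> //.
  by move: uz nuz; rewrite -gv => /image_fle_level [//|]; rewrite eu.
split; first exact: survivor_image_fle iT eu lt_v_m.
by move=> /ker_g /merge_key_level; rewrite eu => eq_m; rewrite -eq_m ltnn in lt_v_m.
Qed.

End MergeablePairs.

Lemma merge_key_mergeable (U : fposet) (g : Esub V -> U) :
  reduces_to g -> (forall u v, g u = g v -> merge_key u = merge_key v) ->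
  forall u v, merge_key u = merge_key v -> g u <> g v ->
  exists u' v', [/\ merge_key u' = merge_key v', g u' <> g v' &
                    forall z, flt (g u') z <-> flt (g v') z].
Proof.
move=> red_g ker_g u v kuv guv.
pose unmerged_at m := [exists p : Esub V * Esub V,
  [&& merge_key p.1 == merge_key p.2, g p.1 != g p.2 & level (val p.1) == m]].
have ex_unmerged : exists m, unmerged_at m.
  exists (level (val u)); apply/existsP; exists (u, v).
  by rewrite /= kuv !eqxx andbT; apply/eqP.
case: (ex_minnP ex_unmerged) => m /existsP [[u' v'] /and3P [/eqP kuv' /eqP guv' /eqP lu']].
move=> min_m.
have merged_below a b : merge_key a = merge_key b -> level (val a) < m -> g a = g b.
  move=> kab lt_a; apply/eqP; apply: contraT => gab; suff: m <= level (val a) by lia.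
  by apply: min_m; apply/existsP; exists (a, b); rewrite kab !eqxx gab.
exists u', v'; split=> //.
case/merge_keyP: kuv' => [eu'|[k [i [j [eu ev iT jT _]]]]]; first by rewrite eu' in guv'.
move: lu'; rewrite eu => /= eq_k; subst k => z.
have flt_image := survivor_image_flt red_g ker_g merged_below.
by rewrite (flt_image _ _ iT eu) (flt_image _ _ jT ev).
Qed.

End LevelsOfY.

Local Open Scope fset_scope.

Theorem mainTheorem8 (n : nat) (V : {fset Yn n}) :
  finite_Esubspace V ->
  forall c : Esub V -> color n,
    weak_coloring c ->
    exists (U : fposet) (g : Esub V -> U),
      [/\ reduces_to g,
          (forall u v : Esub V, g u = g v -> c u = c v) &
          (forall m : nat,
             (forall i : 'I_(2 ^ n.+1), Some (m, i) \in V) ->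
             exists (i j : 'I_(2 ^ n.+1)) (u v : Esub V),
               [/\ (i < j)%N, val u = Some (m, i), val v = Some (m, j) & g u = g v])].
Proof.
move=> [_ V_upset] c c_mono.
have [U [g [red_g ker_g]]] := reduces_to_key_kernel (Esub_poset V_upset)
  (@merge_key_mergeable _ _ V_upset c).
exists U, g; split=> // [u v /ker_g|m yV]; first exact: merge_key_color.
have fullm : full V m by apply/forallP.
have [i0 /survivorsSP [_ iT [i' [i'T ni'i ci']]]] :=
  survivorsS_nonempty V_upset c_mono fullm.
have [uV u'V] := (yV i0, yV i').
have g_eq : g (FSetSub uV) = g (FSetSub u'V) by apply/ker_g/merge_key_survivors.
case: (ltngtP i0 i') => [lt|lt|/val_inj eq]; last by rewrite eq eqxx in ni'i.
- by exists i0, i', (FSetSub uV), (FSetSub u'V).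
- by exists i', i0, (FSetSub u'V), (FSetSub uV).
Qed.
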